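(* Let $\epsilon>0$ and let $a,b,c,d\in\Lambda_+$ satisfy: (1) $ad-bc\neq0$; (2) $\mathrm{val}(a)\le\mathrm{val}(b),\mathrm{val}(c)$ and $\mathrm{val}(d)\le\mathrm{val}(b),\mathrm{val}(c)$; (3) $\mathrm{val}(a)+\mathrm{val}(d)<\mathrm{val}(b)+\mathrm{val}(c)$. Let $$F(z_1,z_2)=\Bigl(az_1+bz_2+\sum_{v}\lambda_vz^v,\ cz_1+dz_2+\sum_v\eta_vz^v\Bigr),$$ where $v=(v_1,v_2)$ ranges over $\mathbb Z_{\ge0}^2$ with $v_1+v_2\ge2$, $z^v=z_1^{v_1}z_2^{v_2}$, and the coefficients satisfy $\mathrm{val}(\lambda_v)\ge\mathrm{val}(a)$, $\mathrm{val}(\eta_v)\ge\mathrm{val}(d)$ for all $v$, and (4) $\mathrm{val}(\lambda_{(i,j)})\ge\mathrm{val}(d)$ whenever $j\ge1$ and $\mathrm{val}(\eta_{(i,j)})\ge\mathrm{val}(a)$ whenever $i\ge1$. Then for all $C_1,C_2\in\Lambda$ with $\mathrm{val}(C_1)>\mathrm{val}(a)+\epsilon$ and $\mathrm{val}(C_2)>\mathrm{val}(d)+\epsilon$, the equation $F(z_1,z_2)=(C_1,C_2)$ has a unique solution $(z_1,z_2)\in(T^\epsilon\Lambda_0)^2$.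
   Context: $\Lambda$ is the Novikov field $\{\sum_{i\ge0}c_iT^{\lambda_i}: c_i\in\mathbb C,\ \lambda_i\to\infty\}$, $\mathrm{val}(\sum c_iT^{\lambda_i})=\min\{\lambda_i:c_i\ne0\}$ (with $\mathrm{val}(0)=\infty$), $\Lambda_0=\{\mathrm{val}\ge0\}$, $\Lambda_+=\{\mathrm{val}>0\}$, and $T^\epsilon\Lambda_0=\{x:\mathrm{val}(x)\ge\epsilon\}$. The series defining $F$ converge in the $T$-adic topology on $(T^\epsilon\Lambda_0)^2$. *)

From HB Require Import structures.
From mathcomp Require Import all_boot all_order all_algebra.
From mathcomp Require Import all_classical all_reals.
From mathcomp Require Import ereal.
From mathcomp Require Import complex.
From mathcomp Require Import Rstruct.
Import Order.TTheory GRing.Theory Num.Theory.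

Set Implicit Arguments.
Unset Strict Implicit.
Unset Printing Implicit Defensive.

Local Open Scope classical_set_scope.
Local Open Scope ring_scope.

Definition RR : realType := Rdefinitions.R.
Definition CC := RR[i].

(* An element of the Novikov field  sum_i c_i T^{lambda_i}  is represented by
   its coefficient function  lambda |-> (coefficient of T^lambda).  *)
Definition nov := RR -> CC.

(* Membership in Lambda: lambda_i -> infinity, i.e. for every bound M only
   finitely many exponents below M carry a non-zero coefficient. *)
Definition is_nov (x : nov) : Prop :=
  forall M : RR, finite_set [set l : RR | l < M /\ x l != 0].

(* valuation: min of the support; val 0 = +oo *)
Definition nval (x : nov) : \bar RR :=
  ereal_inf [set l%:E | l in [set l : RR | x l != 0]].

Definition nzero : nov := fun _ => 0.
Definition none : nov := fun l => if l == 0 then 1 else 0.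
Definition nadd (x y : nov) : nov := fun l => x l + y l.
Definition nopp (x : nov) : nov := fun l => - x l.
Definition nsub (x y : nov) : nov := nadd x (nopp y).
(* Cauchy product: the sum has finite support when x, y are in Lambda *)
Definition nmul (x y : nov) : nov :=
  fun l => (\sum_(m \in [set: RR]) x m * y (l - m))%R.
Fixpoint npow (x : nov) (n : nat) : nov :=
  match n with O => none | S k => nmul (npow x k) x end.

Definition nmono (z1 z2 : nov) (i j : nat) : nov := nmul (npow z1 i) (npow z2 j).

Definition hpartial (coef : nat -> nat -> nov) (z1 z2 : nov) (N : nat) : nov :=
  fun l => \sum_(i < N.+1) \sum_(j < N.+1 | (2 <= i + j <= N)%N)
              nmul (coef i j) (nmono z1 z2 i j) l.

Definition tconv (u : nat -> nov) (s : nov) : Prop :=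
  forall M : RR, exists N : nat, forall n : nat, (N <= n)%N ->
    (M%:E <= nval (nsub s (u n)))%E.

(* F_k(z1,z2) = C :  the series  p z1 + q z2 + sum_v coef_v z^v
   (summed by increasing total degree) converges T-adically to C *)
Definition Fcomp_eq (p q : nov) (coef : nat -> nat -> nov)
    (z1 z2 C : nov) : Prop :=
  tconv (fun N => nadd (nadd (nmul p z1) (nmul q z2)) (hpartial coef z1 z2 N)) C.

From HB Require Import structures.
From mathcomp Require Import all_boot all_order all_algebra.
From mathcomp Require Import all_classical all_reals.
From mathcomp Require Import ereal.
From mathcomp Require Import complex.
From mathcomp Require Import Rstruct.
From mathcomp Require Import ring lra finmap.
Import Order.TTheory GRing.Theory Num.Theory.
Local Open Scope classical_set_scope.
Local Open Scope ring_scope.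

(* Write a = a0 T^(val a) + a' and d = d0 T^(val d) + d', so that val a' > val a
   and val d' > val d.  Then F(z) = C is equivalent to the fixed-point equation
     z1 = T^(-val a) (C1 - a' z1 - b z2 - N_lam(z)) / a0,
     z2 = T^(-val d) (C2 - c z1 - d' z2 - N_eta(z)) / d0,
   N_lam, N_eta being the terms of degree >= 2.  On (T^eps Lambda_0)^2 this map
   is a contraction for the distance which weights the first coordinate by
   T^(-p): the remainders a', d' gain their gap over the leading term, the
   terms of degree >= 2 gain eps, and the off-diagonal terms b, c gain for a
   suitable p because val a + val d < val b + val c.  As Lambda is complete,
   the fixed point exists and is unique in the ball. *)

Set Implicit Arguments.
Unset Strict Implicit.

Definition nval_ge (x : nov) (r : RR) := forall l, l < r -> x l = 0.

Lemma nval_geP x r : (r%:E <= nval x)%E <-> nval_ge x r.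
Proof.
split.
- move=> H l lr; apply/eqP; apply: contraTT H => xl.
  rewrite -ltNge; apply: (le_lt_trans (y := l%:E)); last by rewrite lte_fin.
  by apply: ereal_inf_lbound; exists l.
- move=> H; apply: le_ereal_inf_tmp => _ [l /= xl <-]; rewrite lee_fin leNgt.
  by apply/negP => lr; move: xl; rewrite H ?eqxx.
Qed.

Lemma nval_ge_le x r s : nval_ge x r -> s <= r -> nval_ge x s.
Proof. by move=> h sr l ls; apply: h; lra. Qed.

Lemma nval_ge_ext f g t : (forall l, f l = g l) -> nval_ge g t -> nval_ge f t.
Proof. by move=> e h l lt; rewrite e h. Qed.

Lemma nval_geD x y r : nval_ge x r -> nval_ge y r -> nval_ge (nadd x y) r.
Proof. by move=> hx hy l lr; rewrite /nadd hx ?hy ?addr0. Qed.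

Lemma nval_geN x r : nval_ge x r -> nval_ge (nopp x) r.
Proof. by move=> hx l lr; rewrite /nopp hx ?oppr0. Qed.

Lemma nval_geB x y r : nval_ge x r -> nval_ge y r -> nval_ge (nsub x y) r.
Proof. by move=> hx hy; apply: nval_geD => //; apply: nval_geN. Qed.

Lemma nval_ge_mul x y r s : nval_ge x r -> nval_ge y s -> nval_ge (nmul x y) (r + s).
Proof.
move=> hx hy l ll; rewrite /nmul fsbig1 // => m _.
case: (ltP m r) => mr; first by rewrite hx ?mul0r.
by rewrite hy ?mulr0 //; lra.
Qed.

Lemma nval_ge_subr_eq x y : (forall M, nval_ge (nsub x y) M) -> x = y.
Proof.
move=> h; apply/funext => l; apply/eqP; rewrite -subr_eq0; apply/eqP.
by apply: (h (l + 1)); lra.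
Qed.

Lemma nval_eqy x : nval x = +oo%E -> x = nzero.
Proof.
move=> xy; apply/funext => l; apply: (nval_geP x (l + 1)).1; last lra.
by rewrite xy leey.
Qed.

Lemma seq_gap (s : seq RR) r : (forall l, l \in s -> r < l) ->
  exists2 g, 0 < g & forall l, l \in s -> r + g <= l.
Proof.
elim: s => [|y s IH] hs; first by exists 1 => // l; rewrite in_nil.
have [g g0 hg] : exists2 g, 0 < g & forall l, l \in s -> r + g <= l.
  by apply: IH => l ls; apply: hs; rewrite in_cons ls orbT.
have yr := hs y (mem_head y s).
have [gy|yg] := leP g (y - r).
  by exists g => // l; rewrite in_cons => /orP[/eqP -> | /hg]; lra.
by exists (y - r) => [|l]; [lra | rewrite in_cons => /orP[/eqP -> | /hg]; lra].
Qed.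

(* Only finitely many exponents below r + 1 carry a coefficient, so a zero
   coefficient at r leaves a gap above r. *)
Lemma nval_ge_gap x r : is_nov x -> nval_ge x r -> x r = 0 ->
  exists2 g, 0 < g & nval_ge x (r + g).
Proof.
move=> nx hx xr; have [s Es] := (finite_seqP _).1 (nx (r + 1)).
have [g g0 hg] : exists2 g, 0 < g & forall l, l \in s -> r + g <= l.
  apply: seq_gap => l ls; have : [set` s] l by [].
  rewrite -Es => -[_ xl]; case: (ltgtP l r) => // [lr|lr].
    by move: xl; rewrite hx ?eqxx.
  by move: xl; rewrite lr xr eqxx.
have [k [k0 k1 kg]] : exists k, [/\ 0 < k, k <= 1 & k <= g].
  by have [g1|g1] := leP g 1; [exists g | exists 1]; split; lra.
exists k => // l lt; apply/eqP/negPn/negP => xl.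
have : [set` s] l by rewrite -Es; split => //; lra.
by move=> /= /hg; lra.
Qed.

Definition supp_below (x : nov) (c : RR) := [set m | m < c /\ x m != 0].

Lemma nmul_fin x y l (A : set RR) : finite_set A ->
  (forall m, x m * y (l - m) != 0 -> A m) ->
  nmul x y l = \sum_(m <- fset_set A) x m * y (l - m).
Proof.
move=> fA HA; rewrite /nmul -fsbig_finite //.
apply/esym/fsbig_widen => // m [_ nA] /=; apply/eqP.
by apply: contra_notT nA => /HA.
Qed.

Lemma nmul_term_suppl x y l s m : nval_ge y s ->
  x m * y (l - m) != 0 -> supp_below x (l - s + 1) m.
Proof.
move=> hy; rewrite mulf_eq0 negb_or => /andP[xm ym]; split => //.
case: (ltP (l - m) s) => h; first by move: ym; rewrite hy ?eqxx.
lra.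
Qed.

Lemma nmul_term_suppr x y l r m : nval_ge x r ->
  x m * y (l - m) != 0 -> ((fun n => l - n) @` supp_below y (l - r + 1)) m.
Proof.
move=> hx; rewrite mulf_eq0 negb_or => /andP[xm ym].
exists (l - m); last by rewrite opprB addrC subrK.
split => //; case: (ltP m r) => h; first by move: xm; rewrite hx ?eqxx.
lra.
Qed.

Lemma nmulBr x y y' s l : is_nov x -> nval_ge y s -> nval_ge y' s ->
  nmul x (nsub y y') l = nmul x y l - nmul x y' l.
Proof.
move=> nx hy hy'; have hyy := nval_geB hy hy'.
rewrite !(@nmul_fin _ _ l (supp_below x (l - s + 1))) //;
  try by [apply: nx | move=> m; apply: nmul_term_suppl].
by rewrite -sumrB; apply: eq_bigr => m _; rewrite /nsub /nadd /nopp mulrBr.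
Qed.

Lemma nmulDl x x' y r l : is_nov y -> nval_ge x r -> nval_ge x' r ->
  nmul (nadd x x') y l = nmul x y l + nmul x' y l.
Proof.
move=> ny hx hx'; have hxx := nval_geD hx hx'.
have fA : finite_set ((fun n => l - n) @` supp_below y (l - r + 1)).
  exact/finite_image/ny.
rewrite !(@nmul_fin _ _ l _ fA); try by move=> m; apply: nmul_term_suppr.
by rewrite -big_split; apply: eq_bigr => m _; rewrite /nadd mulrDl.
Qed.

Lemma nmulBl x x' y r l : is_nov y -> nval_ge x r -> nval_ge x' r ->
  nmul (nsub x x') y l = nmul x y l - nmul x' y l.
Proof.
move=> ny hx hx'; rewrite /nsub (nmulDl l ny hx (nval_geN hx')).
congr (_ + _); have hxx := nval_geN hx'.
have fA : finite_set ((fun n => l - n) @` supp_below y (l - r + 1)).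
  exact/finite_image/ny.
rewrite !(@nmul_fin _ _ l _ fA); try by move=> m; apply: nmul_term_suppr.
by rewrite -sumrN; apply: eq_bigr => m _; rewrite /nopp mulNr.
Qed.

Lemma nov_ext f g : (forall l, f l = g l) -> is_nov f -> is_nov g.
Proof. by move=> e; have -> : g = f by apply/funext => l; rewrite e. Qed.

Lemma nov0 : is_nov nzero.
Proof.
move=> M; apply: (sub_finite_set _ (@finite_set0 RR)) => l [_].
by rewrite eqxx.
Qed.

Lemma nov1 : is_nov none.
Proof.
move=> M; apply: (sub_finite_set _ (finite_set1 (0:RR))) => l [_].
by rewrite /none; case: ifP => [/eqP -> //|_]; rewrite eqxx.
Qed.

Lemma nval_ge1 : nval_ge none 0.
Proof. by move=> l l0; rewrite /none; case: eqP => // e; move: l0; rewrite e ltxx. Qed.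

Lemma nov_add x y : is_nov x -> is_nov y -> is_nov (nadd x y).
Proof.
move=> nx ny M.
have hf : finite_set (supp_below x M `|` supp_below y M).
  by rewrite finite_setU; split; [apply: nx | apply: ny].
apply: (sub_finite_set _ hf) => l [lM]; rewrite /nadd.
case: (eqVneq (x l) 0) => [-> |xl]; last by left.
by rewrite add0r => yl; right.
Qed.

Lemma nov_opp x : is_nov x -> is_nov (nopp x).
Proof.
move=> nx M; apply: (sub_finite_set _ (nx M)) => l [lM].
by rewrite /nopp oppr_eq0.
Qed.

Lemma nov_sub x y : is_nov x -> is_nov y -> is_nov (nsub x y).
Proof. by move=> nx ny; apply: nov_add => //; apply: nov_opp. Qed.

Lemma nov_sum (I : Type) (r : seq I) (P : pred I) (F : I -> nov) :
  (forall i, P i -> is_nov (F i)) -> is_nov (fun l => \sum_(i <- r | P i) F i l).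
Proof.
move=> hF; elim: r => [|i r IH]; first by apply: (nov_ext _ nov0) => l; rewrite big_nil.
case: (boolP (P i)) => Pi.
  by apply: (nov_ext _ (nov_add (hF i Pi) IH)) => l; rewrite big_cons Pi.
by apply: (nov_ext _ IH) => l; rewrite big_cons (negbTE Pi).
Qed.

Lemma nov_mul x y r s : is_nov x -> is_nov y -> nval_ge x r -> nval_ge y s ->
  is_nov (nmul x y).
Proof.
move=> nx ny hx hy M.
apply: (sub_finite_set _ (finite_image2 +%R (nx (M - s)) (ny (M - r)))).
move=> l [lM nz].
have [m hm] : exists m, x m * y (l - m) != 0.
  apply: contrapT => hn; move/eqP: nz; apply; rewrite /nmul fsbig1 // => m _.
  by apply/eqP/negPn/negP => hm; apply: hn; exists m.
move: hm; rewrite mulf_eq0 negb_or => /andP[xm ym].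
have mr : r <= m by case: (ltP m r) => // h; move: xm; rewrite hx ?eqxx.
have ms : s <= l - m by case: (ltP (l - m) s) => // h; move: ym; rewrite hy ?eqxx.
exists m; first by split => //; lra.
exists (l - m); first by split => //; lra.
by rewrite addrC subrK.
Qed.

(* [nshift r al x] is T^(-r) x / al. *)
Definition nshift (r : RR) (al : CC) (x : nov) : nov := fun l => x (l + r) / al.

Lemma nov_shift r al x : is_nov x -> is_nov (nshift r al x).
Proof.
move=> nx M; apply: (sub_finite_set _ (finite_image (fun n => n - r) (nx (M + r)))).
move=> l [lM]; rewrite /nshift mulf_eq0 negb_or => /andP[xl _].
by exists (l + r); [split => //; lra | rewrite addrK].
Qed.

Lemma nval_ge_shift r al x t : nval_ge x t -> nval_ge (nshift r al x) (t - r).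
Proof. by move=> hx l lt; rewrite /nshift hx ?mul0r //; lra. Qed.

Definition ncauchy (u : nat -> nov) := forall M, exists N, forall n l,
  (N <= n)%N -> l < M -> u n l = u N l.

Definition nconv (u : nat -> nov) (s : nov) := forall M, exists N, forall n,
  (N <= n)%N -> nval_ge (nsub s (u n)) M.

(* Coefficientwise limit; its value is only meaningful for Cauchy sequences. *)
Definition nlim (u : nat -> nov) : nov :=
  fun l => u (xget 0%N [set N | forall n, (N <= n)%N -> u n l = u N l]) l.

Lemma tconvE : tconv = nconv.
Proof.
apply/funext => u; apply/funext => s; apply/propext.
by split => h M; have [N hN] := h M; exists N => n /hN /nval_geP.
Qed.

Lemma nconvP u s M : nconv u s ->
  exists N, forall n l, (N <= n)%N -> l < M -> s l = u n l.
Proof.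
move=> h; have [N hN] := h M; exists N => n l nN lM.
by apply/eqP; rewrite -subr_eq0; apply/eqP; apply: (hN n nN).
Qed.

Lemma ncauchy_nconv u : ncauchy u -> nconv u (nlim u).
Proof.
move=> hu M; have [N hN] := hu M; exists N => n nN l lM.
have : exists N, forall n, (N <= n)%N -> u n l = u N l.
  by exists N => k kN; apply: hN.
move=> /(xgetPex 0%N); rewrite /nsub /nadd /nopp /nlim.
move: (xget 0%N _) => N1 h1; rewrite -(h1 (maxn n N1)) ?leq_maxr //.
by rewrite hN ?(leq_trans nN (leq_maxl _ _)) // -(hN n l nN lM) subrr.
Qed.

Lemma nov_nlim u : ncauchy u -> (forall n, is_nov (u n)) -> is_nov (nlim u).
Proof.
move=> hu nu M; have [N hN] := nconvP M (ncauchy_nconv hu).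
by apply: (sub_finite_set _ (nu N M)) => l [lM]; rewrite (hN N l).
Qed.

Lemma nconv_uniq u s s' : nconv u s -> nconv u s' -> s = s'.
Proof.
move=> h h'; apply/funext => l.
have [N1 h1] := nconvP (l + 1) h; have [N2 h2] := nconvP (l + 1) h'.
rewrite (h1 (maxn N1 N2) l) ?leq_maxl //; last lra.
by rewrite (h2 (maxn N1 N2) l) ?leq_maxr //; lra.
Qed.

Lemma nval_ge_nconvB u s w t N : nconv u s ->
  (forall n, (N <= n)%N -> nval_ge (nsub (u n) w) t) -> nval_ge (nsub s w) t.
Proof.
move=> h hu l lt; have [N1 hN] := nconvP (l + 1) h.
rewrite /nsub /nadd (hN (maxn N N1) l) ?leq_maxr //; last lra.
by apply: hu => //; apply: leq_maxl.
Qed.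

Lemma nval_ge_nconv u s t : nconv u s -> (forall n, nval_ge (u n) t) -> nval_ge s t.
Proof.
have subr0 x : nsub x nzero = x.
  by apply/funext => l; rewrite /nsub /nadd /nopp /nzero oppr0 addr0.
move=> h hu; rewrite -[s]subr0; apply: (nval_ge_nconvB (N := 0) h) => n _.
by rewrite subr0.
Qed.

Lemma nconv_addl u s x : nconv u s -> nconv (fun n => nadd x (u n)) (nadd x s).
Proof.
move=> h M; have [N hN] := h M; exists N => n nN l lM.
have := hN n nN l lM; rewrite /nsub /nadd /nopp => e.
by rewrite opprD addrACA subrr add0r.
Qed.

Lemma ger_addr_mulrn (e x M : RR) : 0 < e -> exists N : nat, M <= x + e *+ N.
Proof.
move=> e0; exists (Num.Def.archi_bound (`|M - x| / e)).
have h := @archi_boundP _ (`|M - x| / e) (divr_ge0 (normr_ge0 _) (ltW e0)).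
have h2 : `|M - x| <= e * (Num.Def.archi_bound (`|M - x| / e))%:R.
  by rewrite -ler_pdivrMl // mulrC ltW.
rewrite -mulr_natr; have := ler_norm (M - x); lra.
Qed.

(* [Tball r x] : x lies in T^r Lambda_0. *)
Definition Tball (r : RR) (x : nov) := is_nov x /\ nval_ge x r.

Lemma Tball_mul r s x y : Tball r x -> Tball s y -> Tball (r + s) (nmul x y).
Proof. by move=> [nx hx] [ny hy]; split; [apply: nov_mul hx hy | apply: nval_ge_mul]. Qed.

Lemma Tball_le r s x : r <= s -> Tball s x -> Tball r x.
Proof. by move=> rs [nx hx]; split => //; apply: nval_ge_le hx rs. Qed.

Lemma Tball_sub r x y : Tball r x -> Tball r y -> Tball r (nsub x y).
Proof. by move=> [nx hx] [ny hy]; split; [apply: nov_sub | apply: nval_geB]. Qed.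

Lemma Tball_add r x y : Tball r x -> Tball r y -> Tball r (nadd x y).
Proof. by move=> [nx hx] [ny hy]; split; [apply: nov_add | apply: nval_geD]. Qed.

Lemma Tball_shift r s al x : Tball (r + s) x -> Tball r (nshift s al x).
Proof.
move=> [nx hx]; split; first exact: nov_shift.
by apply: (nval_ge_le (nval_ge_shift (r := s) al hx)); lra.
Qed.

Section Monomials.
Variables (e : RR) (z1 z2 w1 w2 : nov).
Hypotheses (bz1 : Tball e z1) (bz2 : Tball e z2) (bw1 : Tball e w1) (bw2 : Tball e w2).

Lemma Tball_npow z i : Tball e z -> Tball (e *+ i) (npow z i).
Proof.
move=> bz; elim: i => [|i IH] /=; first by split; [exact: nov1 | exact: nval_ge1].
by rewrite mulrSr; apply: Tball_mul.
Qed.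

Lemma Tball_nmono i j : Tball (e *+ (i + j)) (nmono z1 z2 i j).
Proof. by rewrite mulrnDr; apply: Tball_mul; apply: Tball_npow. Qed.

Lemma nval_ge_npowB z w t i : Tball e z -> Tball e w -> nval_ge (nsub z w) t ->
  nval_ge (nsub (npow z i) (npow w i)) (t + e *+ i - e).
Proof.
move=> bz bw hzw; elim: i => [|i IH] /=.
  by move=> l _; rewrite /nsub /nadd /nopp subrr.
have [[nz hz] [nw hw]] := (bz, bw).
have [_ hzi] := Tball_npow i bz; have [nwi hwi] := Tball_npow i bw.
apply: (@nval_ge_ext _ (nadd (nmul (nsub (npow z i) (npow w i)) z)
                             (nmul (npow w i) (nsub z w)))).
  move=> l; rewrite /nadd (nmulBl l nz hzi hwi) (nmulBr l nwi hz hw).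
  by rewrite /nsub /nadd /nopp; ring.
apply: nval_geD.
  by apply: (nval_ge_le (nval_ge_mul IH hz)); rewrite mulrSr; lra.
by apply: (nval_ge_le (nval_ge_mul hwi hzw)); rewrite mulrSr; lra.
Qed.

Lemma nval_ge_nmonoB t i j : nval_ge (nsub z1 w1) t -> nval_ge (nsub z2 w2) t ->
  nval_ge (nsub (nmono z1 z2 i j) (nmono w1 w2 i j)) (t + e *+ (i + j) - e).
Proof.
move=> d1 d2.
have [n1 h1] := Tball_npow j bz2; have [_ h2] := Tball_npow i bz1.
have [n3 h3] := Tball_npow i bw1; have [_ h4] := Tball_npow j bw2.
apply: (@nval_ge_ext _ (nadd (nmul (nsub (npow z1 i) (npow w1 i)) (npow z2 j))
                             (nmul (npow w1 i) (nsub (npow z2 j) (npow w2 j))))).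
  move=> l; rewrite /nadd /nmono (nmulBl l n1 h2 h3) (nmulBr l n3 h1 h4).
  by rewrite /nsub /nadd /nopp; ring.
rewrite mulrnDr; apply: nval_geD.
  apply: (nval_ge_le (nval_ge_mul (nval_ge_npowB (i:=i) bz1 bw1 d1) h1)); lra.
apply: (nval_ge_le (nval_ge_mul h3 (nval_ge_npowB (i:=j) bz2 bw2 d2))); lra.
Qed.

End Monomials.

Lemma sum_deg_widen (F : nat -> nat -> CC) N K : (N < K)%N ->
  \sum_(i < N.+1) \sum_(j < N.+1 | (2 <= i + j <= N)%N) F i j =
  \sum_(i < K) \sum_(j < K | (2 <= i + j <= N)%N) F i j.
Proof.
move=> NK.
rewrite (big_ord_widen K (fun i => \sum_(j < N.+1 | (2 <= i + j <= N)%N) F i j)) //.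
rewrite big_mkcond; apply: eq_bigr => i _; case: ifP => iN.
  rewrite (big_ord_widen_cond K (fun j => (2 <= i + j <= N)%N)) //.
  apply: eq_bigl => j; apply: andb_idr => /andP[_ h].
  by rewrite ltnS (leq_trans _ h) // leq_addl.
rewrite big1 // => j /andP[_ h]; move: iN; rewrite ltnS.
by rewrite (leq_trans (leq_addr j i) h).
Qed.

Section HigherOrderTerms.
Variables (coef : nat -> nat -> nov) (v e : RR).
Hypothesis coef_ball : forall i j, (2 <= i + j)%N -> Tball v (coef i j).
Hypothesis e_gt0 : 0 < e.

Definition hsum (z1 z2 : nov) : nov := nlim (hpartial coef z1 z2).

Lemma Tball_hterm z1 z2 i j : Tball e z1 -> Tball e z2 -> (2 <= i + j)%N ->
  Tball (v + e *+ (i + j)) (nmul (coef i j) (nmono z1 z2 i j)).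
Proof.
by move=> bz1 bz2 ij; apply: Tball_mul; [apply: coef_ball | apply: Tball_nmono].
Qed.

Lemma hpartial_stable z1 z2 N n l : Tball e z1 -> Tball e z2 ->
  (N <= n)%N -> l < v + e *+ N.+1 ->
  hpartial coef z1 z2 n l = hpartial coef z1 z2 N l.
Proof.
move=> bz1 bz2 Nn lt; pose F i j := nmul (coef i j) (nmono z1 z2 i j) l.
rewrite /hpartial (@sum_deg_widen F n n.+1) // (@sum_deg_widen F N n.+1) //.
apply: eq_bigr => i _; rewrite [LHS]big_mkcond [RHS]big_mkcond.
apply: eq_bigr => j _; case: (boolP (2 <= i + j <= N)%N) => h.
  by case/andP: h => k1 k2; rewrite ifT // k1 (leq_trans k2 Nn).
case: ifP => // /andP[ij _].
have hN : (N < i + j)%N by move: h; rewrite negb_and ij /= -ltnNge.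
have [_ hv] := Tball_hterm bz1 bz2 ij; rewrite /F hv //; apply: (lt_le_trans lt).
by rewrite lerD2l; apply: ler_wpMn2l; [apply: ltW | ].
Qed.

Lemma hpartial_ncauchy z1 z2 : Tball e z1 -> Tball e z2 ->
  ncauchy (hpartial coef z1 z2).
Proof.
move=> bz1 bz2 M; have [N hN] := ger_addr_mulrn v M e_gt0.
exists N => n l Nn lM; apply: hpartial_stable => //; apply: (lt_le_trans lM).
by apply: (le_trans hN); rewrite lerD2l mulrSr lerDl ltW.
Qed.

Lemma hpartial_nconv z1 z2 : Tball e z1 -> Tball e z2 ->
  nconv (hpartial coef z1 z2) (hsum z1 z2).
Proof. by move=> bz1 bz2; apply/ncauchy_nconv/hpartial_ncauchy. Qed.

Lemma Tball_hsum z1 z2 : Tball e z1 -> Tball e z2 -> Tball (v + e + e) (hsum z1 z2).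
Proof.
move=> bz1 bz2; split.
  apply: nov_nlim => [|N]; first exact: hpartial_ncauchy.
  apply: nov_sum => i _; apply: nov_sum => j /andP[ij _].
  by have [] := Tball_hterm bz1 bz2 ij.
apply: (nval_ge_nconv (hpartial_nconv bz1 bz2)) => N l lt.
rewrite /hpartial big1 // => i _; rewrite big1 // => j /andP[ij _].
have [_ ->] := Tball_hterm bz1 bz2 ij => //; apply: (lt_le_trans lt).
by rewrite -addrA -mulr2n lerD2l ler_wpMn2l // ltW.
Qed.

Lemma nval_ge_hsumB z1 z2 w1 w2 t :
  Tball e z1 -> Tball e z2 -> Tball e w1 -> Tball e w2 ->
  nval_ge (nsub z1 w1) t -> nval_ge (nsub z2 w2) t ->
  nval_ge (nsub (hsum z1 z2) (hsum w1 w2)) (v + t + e).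
Proof.
move=> bz1 bz2 bw1 bw2 d1 d2 l lt.
have [N1 e1] := nconvP (l + 1) (hpartial_nconv bz1 bz2).
have [N2 e2] := nconvP (l + 1) (hpartial_nconv bw1 bw2).
rewrite /nsub /nadd /nopp (e1 (maxn N1 N2) l) ?leq_maxl //; last lra.
rewrite (e2 (maxn N1 N2) l) ?leq_maxr //; last lra.
rewrite /hpartial -sumrB big1 // => i _; rewrite -sumrB big1 // => j /andP[ij _].
have [nc hc] := coef_ball ij.
have [_ hm1] := Tball_nmono bz1 bz2 i j; have [_ hm2] := Tball_nmono bw1 bw2 i j.
rewrite -(nmulBr l nc hm1 hm2).
apply: (nval_ge_mul hc (nval_ge_nmonoB (i:=i) (j:=j) bz1 bz2 bw1 bw2 d1 d2)).
have := ler_wpMn2l (ltW e_gt0) ij; rewrite mulr2n; lra.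
Qed.

End HigherOrderTerms.

Section WeightedContraction.
Variables (F : nov * nov -> nov * nov) (e p1 p2 g : RR).
Hypothesis g_gt0 : 0 < g.

Definition pball (z : nov * nov) := Tball e z.1 /\ Tball e z.2.

(* Distance at most T^t for the weights T^p1, T^p2 on the two components. *)
Definition nclose (t : RR) (z w : nov * nov) :=
  nval_ge (nsub z.1 w.1) (t + p1) /\ nval_ge (nsub z.2 w.2) (t + p2).

Hypothesis F_ball : forall z, pball z -> pball (F z).
Hypothesis F_contr : forall z w t, pball z -> pball w ->
  nclose t z w -> nclose (t + g) (F z) (F w).

Let t0 := e - `|p1| - `|p2|.

Lemma nclose_ball z w : pball z -> pball w -> nclose t0 z w.
Proof.
move=> [[_ hz1] [_ hz2]] [[_ hw1] [_ hw2]].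
have := ler_norm p1; have := ler_norm p2; have := normr_ge0 p1; have := normr_ge0 p2.
by split; [apply: (nval_ge_le (nval_geB hz1 hw1)) | apply: (nval_ge_le (nval_geB hz2 hw2))];
  rewrite /t0; lra.
Qed.

Lemma nclose_le t t' z w : t' <= t -> nclose t z w -> nclose t' z w.
Proof.
by move=> tt' [h1 h2]; split; [apply: (nval_ge_le h1) | apply: (nval_ge_le h2)]; lra.
Qed.

Lemma nclose_sym t z w : nclose t z w -> nclose t w z.
Proof.
have opp x y r : nval_ge (nsub x y) r -> nval_ge (nsub y x) r.
  move=> h l lr; have := h l lr; rewrite /nsub /nadd /nopp.
  by move=> /eqP; rewrite subr_eq0 => /eqP ->; rewrite subrr.
by move=> [h1 h2]; split; apply: opp.
Qed.

Lemma nclose_trans t x y z : nclose t x y -> nclose t y z -> nclose t x z.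
Proof.
have tr u v w r : nval_ge (nsub u v) r -> nval_ge (nsub v w) r -> nval_ge (nsub u w) r.
  move=> h h'; apply: (nval_ge_ext _ (nval_geD h h')) => l.
  by rewrite /nsub /nadd /nopp addrA subrK.
by move=> [h1 h2] [h1' h2']; split; [apply: tr h1 h1' | apply: tr h2 h2'].
Qed.

Lemma nclose_eq z w : (forall n, nclose (t0 + g *+ n) z w) -> z = w.
Proof.
move=> h; have comp p : (forall M, exists n, M <= t0 + g *+ n + p).
  move=> M; have [n hn] := ger_addr_mulrn (t0 + p) M g_gt0.
  by exists n; rewrite addrAC.
case: z w h => [z1 z2] [w1 w2] h; congr pair; apply: nval_ge_subr_eq => M.
  by have [n hn] := comp p1 M; have [h1 _] := h n; apply: (nval_ge_le h1).
by have [n hn] := comp p2 M; have [_ h2] := h n; apply: (nval_ge_le h2).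
Qed.

Let u n := iter n F (nzero, nzero).

Lemma iter_ball n : pball (u n).
Proof.
elim: n => [|n IH]; last exact: F_ball.
by split; split => //; apply: nov0.
Qed.

Lemma iter_close n k : nclose (t0 + g *+ n) (u (n + k)) (u n).
Proof.
elim: n => [|n IH]; first by rewrite mulr0n addr0; apply: nclose_ball; apply: iter_ball.
by rewrite mulrSr addrA; apply: F_contr => //; apply: iter_ball.
Qed.

Lemma iter_ncauchy : ncauchy (fun n => (u n).1) /\ ncauchy (fun n => (u n).2).
Proof.
have cauchy p (c : nat -> nov) :
    (forall n m, (n <= m)%N -> nval_ge (nsub (c m) (c n)) (t0 + g *+ n + p)) ->
    ncauchy c.
  move=> hc M; have [N hN] := ger_addr_mulrn (t0 + p) M g_gt0.
  exists N => n l Nn lM; apply/eqP; rewrite -subr_eq0; apply/eqP.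
  by apply: (hc N n Nn); lra.
by split; [apply: (cauchy p1) | apply: (cauchy p2)] => n m /subnKC <-;
  have [] := iter_close n (m - n).
Qed.

Let zstar := (nlim (fun n => (u n).1), nlim (fun n => (u n).2)).

Lemma iter_nconv : nconv (fun n => (u n).1) zstar.1 /\ nconv (fun n => (u n).2) zstar.2.
Proof. by have [c1 c2] := iter_ncauchy; split; apply: ncauchy_nconv. Qed.

Lemma zstar_ball : pball zstar.
Proof.
have [[c1 c2] [l1 l2]] := (iter_ncauchy, iter_nconv).
split; split.
- by apply: nov_nlim => // n; have [[]] := iter_ball n.
- by apply: (nval_ge_nconv l1) => n; have [[]] := iter_ball n.
- by apply: nov_nlim => // n; have [_ []] := iter_ball n.
- by apply: (nval_ge_nconv l2) => n; have [_ []] := iter_ball n.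
Qed.

Lemma zstar_close n : nclose (t0 + g *+ n) zstar (u n).
Proof.
have [l1 l2] := iter_nconv.
split; [apply: (nval_ge_nconvB (N := n) l1) | apply: (nval_ge_nconvB (N := n) l2)];
  by move=> m /subnKC <-; have [] := iter_close n (m - n).
Qed.

Lemma zstar_fixed : F zstar = zstar.
Proof.
apply: nclose_eq => n; apply: (@nclose_trans _ _ (u n.+1)).
  apply: (nclose_le (t := t0 + g *+ n + g)); first by rewrite lerDl ltW.
  by apply: F_contr; [apply: zstar_ball | apply: iter_ball | apply: zstar_close].
apply: nclose_sym; apply: (nclose_le (t := t0 + g *+ n.+1)); last exact: zstar_close.
by rewrite mulrSr lerD2l lerDl ltW.
Qed.

Lemma fixed_point_uniq z w : pball z -> pball w -> F z = z -> F w = w -> z = w.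
Proof.
move=> bz bw Fz Fw; apply: nclose_eq; elim=> [|n IH].
  by rewrite mulr0n addr0; apply: nclose_ball.
by rewrite mulrSr addrA -Fz -Fw; apply: F_contr.
Qed.

Lemma contraction_fixed_point :
  exists z, [/\ pball z, F z = z & forall w, pball w -> F w = w -> w = z].
Proof.
exists zstar; split; [exact: zstar_ball | exact: zstar_fixed |].
by move=> w bw Fw; apply: fixed_point_uniq => //; [apply: zstar_ball | apply: zstar_fixed].
Qed.

End WeightedContraction.

Definition drop_lead (x : nov) (r : RR) : nov := fun m => if m == r then 0 else x m.

Lemma nov_drop_lead x r : is_nov x -> is_nov (drop_lead x r).
Proof.
move=> nx M; apply: (sub_finite_set _ (nx M)) => l [lM].
by rewrite /drop_lead; case: ifP => //; rewrite eqxx.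
Qed.

Lemma nval_ge_drop_lead x r : nval_ge x r -> nval_ge (drop_lead x r) r.
Proof. by move=> hx m mr; rewrite /drop_lead; case: ifP => // _; apply: hx. Qed.

Lemma drop_lead_gap x r : is_nov x -> nval_ge x r ->
  exists2 g, 0 < g & nval_ge (drop_lead x r) (r + g).
Proof.
move=> nx hx; apply: nval_ge_gap; [exact: nov_drop_lead | exact: nval_ge_drop_lead |].
by rewrite /drop_lead eqxx.
Qed.

Lemma nmul_drop_lead x r z l : is_nov z -> nval_ge x r ->
  nmul x z l = x r * z (l - r) + nmul (drop_lead x r) z l.
Proof.
move=> nz hx; pose s : nov := fun m => if m == r then x r else 0.
have E : x = nadd s (drop_lead x r).
  by apply/funext => m; rewrite /nadd /s /drop_lead; case: eqP => [->|_]; rewrite ?addr0 ?add0r.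
have hs : nval_ge s r by move=> m mr; rewrite /s; case: eqP => // em; move: mr; rewrite em ltxx.
rewrite {1}E (nmulDl l nz hs (nval_ge_drop_lead hx)); congr (_ + _).
rewrite (@nmul_fin _ _ l [set r]); first by rewrite fset_set1 big_seq_fset1 /s eqxx.
  exact: finite_set1.
by move=> m; rewrite /s; case: (eqVneq m r) => // _; rewrite mul0r eqxx.
Qed.

Lemma nconv_lead_fixed (X Y C N : nov) (hp : nat -> nov) (r : RR) (al : CC) z :
  al != 0 -> nconv hp N -> (forall l, X l = al * z (l - r) + Y l) ->
  nconv (fun k => nadd X (hp k)) C <-> z = nshift r al (nsub (nsub C Y) N).
Proof.
move=> al0 hN hX; split => [hC | Ez].
  have -> : C = nadd X N := nconv_uniq hC (nconv_addl X hN).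
  apply/funext => l; rewrite /nshift /nsub /nadd /nopp hX addrK.
  by rewrite addrAC addrK addrK mulrC mulKf.
have -> : C = nadd X N.
  apply/funext => l; rewrite /nadd hX Ez /nshift /nsub /nadd /nopp subrK.
  by rewrite mulrC divfK // addrAC !subrK.
exact: nconv_addl.
Qed.

Lemma nval_ge_shiftB r al C Y Y' N N' t :
  nval_ge (nsub Y Y') (t + r) -> nval_ge (nsub N N') (t + r) ->
  nval_ge (nsub (nshift r al (nsub (nsub C Y) N)) (nshift r al (nsub (nsub C Y') N'))) t.
Proof.
move=> hY hN l lt; have lr : l + r < t + r by lra.
move: (hY _ lr) (hN _ lr); rewrite /nshift /nsub /nadd /nopp.
by move=> /eqP; rewrite subr_eq0 => /eqP -> /eqP; rewrite subr_eq0 => /eqP ->; rewrite subrr.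
Qed.

Lemma nval_ge_linB x y z1 z2 w1 w2 r s e t1 t2 u :
  is_nov x -> is_nov y -> nval_ge x r -> nval_ge y s ->
  Tball e z1 -> Tball e z2 -> Tball e w1 -> Tball e w2 ->
  nval_ge (nsub z1 w1) t1 -> nval_ge (nsub z2 w2) t2 -> u <= r + t1 -> u <= s + t2 ->
  nval_ge (nsub (nadd (nmul x z1) (nmul y z2)) (nadd (nmul x w1) (nmul y w2))) u.
Proof.
move=> nx ny hx hy [_ hz1] [_ hz2] [_ hw1] [_ hw2] d1 d2 u1 u2.
apply: (@nval_ge_ext _ (nadd (nmul x (nsub z1 w1)) (nmul y (nsub z2 w2)))).
  move=> l; rewrite /nadd (nmulBr l nx hz1 hw1) (nmulBr l ny hz2 hw2).
  by rewrite /nsub /nadd /nopp; ring.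
by apply: nval_geD;
  [apply: (nval_ge_le (nval_ge_mul hx d1)) | apply: (nval_ge_le (nval_ge_mul hy d2))].
Qed.

(* The weight p of the first coordinate has to absorb the off-diagonal
   terms: [p + ga <= be] for b and [ga <= p + ka] for c, which is possible
   because be + ka = val b + val c - val a - val d > 0. *)
Lemma contraction_weights (eps g be ka : RR) :
  0 < eps -> 0 < g -> 0 <= be -> 0 <= ka -> 0 < be + ka ->
  exists p m ga, [/\ 0 < ga, ga <= g, p + ga <= be, ga <= p + ka &
     [/\ m <= p, m <= 0, p + ga <= m + eps & ga <= m + eps]].
Proof.
move=> e0 g0 b0 k0 s0.
have [ga [ga0 gag gas gae]] :
    exists ga, [/\ 0 < ga, ga <= g, ga <= (be + ka) / 4 & ga <= eps / 4].
  pose ga := Num.min g (Num.min ((be + ka) / 4) (eps / 4)).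
  exists ga; split; rewrite /ga ?lt_min ?ge_min ?lexx ?orbT //.
  by rewrite g0 /=; apply/andP; split; lra.
have [p [p1 p2 p3 p4]] :
    exists p, [/\ p + ga <= be, ga <= p + ka, p <= eps / 2 & - (eps / 2) <= p].
  have [h1|h1] := leP ((be - ka) / 2) (eps / 2); last by exists (eps / 2); split; lra.
  have [h2|h2] := leP (- (eps / 2)) ((be - ka) / 2).
    by exists ((be - ka) / 2); split; lra.
  by exists (- (eps / 2)); split; lra.
have [hp|hp] := leP p 0.
  by exists p, p, ga; split => //; split; lra.
by exists p, 0, ga; split => //; split; lra.
Qed.

Section Inversion.
Variables (a b c d C1 C2 : nov) (lam eta : nat -> nat -> nov) (eps va vb vc vd : RR).
Hypothesis eps_gt0 : 0 < eps.
Hypotheses (na : is_nov a) (nb : is_nov b) (nc : is_nov c) (nd : is_nov d).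
Hypotheses (ha : nval_ge a va) (hb : nval_ge b vb) (hc : nval_ge c vc) (hd : nval_ge d vd).
Hypotheses (a_lead : a va != 0) (d_lead : d vd != 0).
Hypotheses (vab : va <= vb) (vdc : vd <= vc) (vadbc : va + vd < vb + vc).
Hypothesis lam_ball : forall i j, (2 <= i + j)%N -> Tball va (lam i j).
Hypothesis eta_ball : forall i j, (2 <= i + j)%N -> Tball vd (eta i j).
Hypotheses (bC1 : Tball (va + eps) C1) (bC2 : Tball (vd + eps) C2).

Let a' := drop_lead a va.
Let d' := drop_lead d vd.

Definition Fsolve (z : nov * nov) : nov * nov :=
  (nshift va (a va) (nsub (nsub C1 (nadd (nmul a' z.1) (nmul b z.2))) (hsum lam z.1 z.2)),
   nshift vd (d vd) (nsub (nsub C2 (nadd (nmul c z.1) (nmul d' z.2))) (hsum eta z.1 z.2))).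

Lemma Fsolve_ball z : pball eps z -> pball eps (Fsolve z).
Proof.
case: z => z1 z2 [bz1 bz2] /=.
have ba' : Tball va a' by split; [apply: nov_drop_lead | apply: nval_ge_drop_lead].
have bd' : Tball vd d' by split; [apply: nov_drop_lead | apply: nval_ge_drop_lead].
have hsa := Tball_hsum lam_ball eps_gt0 bz1 bz2.
have hse := Tball_hsum eta_ball eps_gt0 bz1 bz2.
split; apply: Tball_shift; (apply: Tball_sub; [apply: Tball_sub; [| apply: Tball_add] |]).
- by rewrite addrC.
- by apply: (Tball_le _ (Tball_mul ba' bz1)); rewrite addrC.
- by apply: (Tball_le _ (Tball_mul (conj nb hb) bz2)); rewrite addrC lerD2r.
- by apply: (Tball_le _ hsa); rewrite addrC lerDl ltW.
- by rewrite addrC.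
- by apply: (Tball_le _ (Tball_mul (conj nc hc) bz1)); rewrite addrC lerD2r.
- by apply: (Tball_le _ (Tball_mul bd' bz2)); rewrite addrC.
- by apply: (Tball_le _ hse); rewrite addrC lerDl ltW.
Qed.

Lemma Fsolve_contr g p m ga z w t :
  nval_ge a' (va + g) -> nval_ge d' (vd + g) ->
  ga <= g -> p + ga <= vb - va -> ga <= p + (vc - vd) ->
  m <= p -> m <= 0 -> p + ga <= m + eps -> ga <= m + eps ->
  pball eps z -> pball eps w ->
  nclose p 0 t z w -> nclose p 0 (t + ga) (Fsolve z) (Fsolve w).
Proof.
move=> a'_gap d'_gap ga_g p_b p_c m_p m_le0 m_eps1 m_eps2.
case: z w => z1 z2 [w1 w2] [/= bz1 bz2] [/= bw1 bw2] [/= d1 d2].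
have d1' : nval_ge (nsub z1 w1) (t + m) by apply: (nval_ge_le d1); lra.
have d2' : nval_ge (nsub z2 w2) (t + m) by apply: (nval_ge_le d2); lra.
have na' := nov_drop_lead va na; have nd' := nov_drop_lead vd nd.
split; apply: nval_ge_shiftB.
- by apply: (nval_ge_linB na' nb a'_gap hb bz1 bz2 bw1 bw2 d1 d2); lra.
- by apply: (nval_ge_le (nval_ge_hsumB lam_ball eps_gt0 bz1 bz2 bw1 bw2 d1' d2')); lra.
- by apply: (nval_ge_linB nc nd' hc d'_gap bz1 bz2 bw1 bw2 d1 d2); lra.
- by apply: (nval_ge_le (nval_ge_hsumB eta_ball eps_gt0 bz1 bz2 bw1 bw2 d1' d2')); lra.
Qed.

Lemma Fsolve_fixedP z : pball eps z ->
  Fsolve z = z <-> Fcomp_eq a b lam z.1 z.2 C1 /\ Fcomp_eq c d eta z.1 z.2 C2.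
Proof.
case: z => z1 z2 [/= bz1 bz2].
have X1 l : nadd (nmul a z1) (nmul b z2) l
    = a va * z1 (l - va) + nadd (nmul a' z1) (nmul b z2) l.
  by rewrite /nadd (nmul_drop_lead l (proj1 bz1) ha) addrA.
have X2 l : nadd (nmul c z1) (nmul d z2) l
    = d vd * z2 (l - vd) + nadd (nmul c z1) (nmul d' z2) l.
  by rewrite /nadd (nmul_drop_lead l (proj1 bz2) hd) addrCA.
rewrite /Fcomp_eq tconvE.
have N1 := hpartial_nconv lam_ball eps_gt0 bz1 bz2.
have N2 := hpartial_nconv eta_ball eps_gt0 bz1 bz2.
rewrite (propext (nconv_lead_fixed _ a_lead N1 X1)).
rewrite (propext (nconv_lead_fixed _ d_lead N2 X2)).
rewrite /Fsolve /=; split => [[E1 E2] | [E1 E2]].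
  by split; apply/esym.
by congr pair; apply/esym.
Qed.

Lemma Fsolve_unique_solution : exists z, [/\ pball eps z,
  Fcomp_eq a b lam z.1 z.2 C1 /\ Fcomp_eq c d eta z.1 z.2 C2 &
  forall w, pball eps w -> Fcomp_eq a b lam w.1 w.2 C1 -> Fcomp_eq c d eta w.1 w.2 C2 ->
    w = z].
Proof.
have [gapa gapa0 a'_gap] := drop_lead_gap na ha.
have [gapd gapd0 d'_gap] := drop_lead_gap nd hd.
pose g := Num.min gapa gapd.
have g0 : 0 < g by rewrite lt_min gapa0.
have a'_g : nval_ge a' (va + g) by apply: (nval_ge_le a'_gap); rewrite lerD2l ge_min lexx.
have d'_g : nval_ge d' (vd + g).
  by apply: (nval_ge_le d'_gap); rewrite lerD2l ge_min lexx orbT.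
have be0 : 0 <= vb - va by rewrite subr_ge0.
have ka0 : 0 <= vc - vd by rewrite subr_ge0.
have bka0 : 0 < vb - va + (vc - vd) by have := vadbc; lra.
have [p [m [ga [ga0 gag gab gac [mp m0 mga1 mga2]]]]] :=
  contraction_weights eps_gt0 g0 be0 ka0 bka0.
have [z [bz Fz z_uniq]] := contraction_fixed_point ga0 Fsolve_ball
  (fun z w t => Fsolve_contr a'_g d'_g gag gab gac mp m0 mga1 mga2
                 (z := z) (w := w) (t := t)).
exists z; split => [//||w bw E1 E2]; first exact/(Fsolve_fixedP bz).
by apply: z_uniq => //; apply/(Fsolve_fixedP bw).
Qed.

End Inversion.

Lemma nmul0l y : nmul nzero y = nzero.
Proof. by apply/funext => l; rewrite /nmul fsbig1 // => m _; rewrite mul0r. Qed.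

Lemma nmul0r x : nmul x nzero = nzero.
Proof. by apply/funext => l; rewrite /nmul fsbig1 // => m _; rewrite mulr0. Qed.

Lemma det_nval_lty a b c d : nsub (nmul a d) (nmul b c) <> nzero ->
  (nval a <= nval b)%E -> (nval a <= nval c)%E ->
  (nval d <= nval b)%E -> (nval d <= nval c)%E ->
  (nval a < +oo)%E /\ (nval d < +oo)%E.
Proof.
move=> det ab ac db dc.
have bc0 x : (nval x <= nval b)%E -> (nval x <= nval c)%E -> nval x = +oo%E ->
    [/\ x = nzero, b = nzero & c = nzero].
  by move=> xb xc xy; rewrite xy !leye_eq in xb xc; split; apply: nval_eqy => //; apply/eqP.
have sub00 : nsub nzero nzero = nzero.
  by apply/funext => l; rewrite /nsub /nadd /nopp subrr.
split; rewrite ltey; apply/eqP => xy; apply: det.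
  by have [-> -> ->] := bc0 a ab ac xy; rewrite !nmul0l.
by have [-> -> ->] := bc0 d db dc xy; rewrite nmul0r nmul0l.
Qed.

Lemma nval_lead x : is_nov x -> (-oo < nval x)%E -> (nval x < +oo)%E ->
  exists r, [/\ nval x = r%:E, nval_ge x r & x r != 0].
Proof.
move=> nx; case E: (nval x) => [r| |] //= _ _.
have hr : nval_ge x r by apply/nval_geP; rewrite E.
exists r; split => //; apply/eqP => xr0; have [g g0 hg] := nval_ge_gap nx hr xr0.
by have := (nval_geP _ _).2 hg; rewrite E lee_fin; lra.
Qed.

Lemma ereal_lower_pick (x : \bar RR) (r M : RR) : (r%:E <= x)%E ->
  exists s, [/\ (s%:E <= x)%E, r <= s & x = s%:E \/ M <= s].
Proof.
case: x => [s | | ] rx //; first by exists s; split; [exact: lexx | rewrite -lee_fin | left].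
exists (Num.max r M); split; first exact: leey.
  by rewrite le_max lexx.
by right; rewrite le_max lexx orbT.
Qed.

Unset Implicit Arguments.

Theorem lemmaA1 (eps : RR) (a b c d : nov)
  (lam eta : nat -> nat -> nov) :
  0 < eps ->
  is_nov a -> is_nov b -> is_nov c -> is_nov d ->
  (0 < nval a)%E -> (0 < nval b)%E -> (0 < nval c)%E -> (0 < nval d)%E ->
  nsub (nmul a d) (nmul b c) <> nzero ->
  (nval a <= nval b)%E -> (nval a <= nval c)%E ->
  (nval d <= nval b)%E -> (nval d <= nval c)%E ->
  (nval a + nval d < nval b + nval c)%E ->
  (forall i j : nat, (2 <= i + j)%N -> is_nov (lam i j) /\ is_nov (eta i j)) ->
  (forall i j : nat, (2 <= i + j)%N -> (nval a <= nval (lam i j))%E) ->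
  (forall i j : nat, (2 <= i + j)%N -> (nval d <= nval (eta i j))%E) ->
  (forall i j : nat, (2 <= i + j)%N -> (1 <= j)%N -> (nval d <= nval (lam i j))%E) ->
  (forall i j : nat, (2 <= i + j)%N -> (1 <= i)%N -> (nval a <= nval (eta i j))%E) ->
  forall C1 C2 : nov, is_nov C1 -> is_nov C2 ->
  (nval a + eps%:E < nval C1)%E -> (nval d + eps%:E < nval C2)%E ->
  exists z1 z2 : nov,
    [/\ is_nov z1, is_nov z2, (eps%:E <= nval z1)%E & (eps%:E <= nval z2)%E] /\
    (Fcomp_eq a b lam z1 z2 C1 /\ Fcomp_eq c d eta z1 z2 C2) /\
    (forall w1 w2 : nov, is_nov w1 -> is_nov w2 ->
       (eps%:E <= nval w1)%E -> (eps%:E <= nval w2)%E ->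
       Fcomp_eq a b lam w1 w2 C1 -> Fcomp_eq c d eta w1 w2 C2 ->
       w1 = z1 /\ w2 = z2).
Proof.
move=> e0 na nb nc nd a0 _ _ d0 det ab ac db dc adbc Hnov Hlam Heta _ _
  C1 C2 nC1 nC2 hC1 hC2.
have [a_fin d_fin] := det_nval_lty det ab ac db dc.
have [va [Ea ha a_lead]] := nval_lead na (lt_trans ltNy0 a0) a_fin.
have [vd [Ed hd d_lead]] := nval_lead nd (lt_trans ltNy0 d0) d_fin.
move: ab dc; rewrite Ea Ed => /(ereal_lower_pick (va + 1)) [vb [/nval_geP hb vab Eb]].
move=> /(ereal_lower_pick (vd + 1)) [vc [/nval_geP hc vdc Ec]].
have vadbc : va + vd < vb + vc.
  case: Eb => [Eb|]; last lra; case: Ec => [Ec|]; last lra.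
  by move: adbc; rewrite Ea Ed Eb Ec -!EFinD lte_fin.
have lam_ball i j : (2 <= i + j)%N -> Tball va (lam i j).
  by move=> ij; split; [case: (Hnov i j ij) | apply/nval_geP; rewrite -Ea; apply: Hlam].
have eta_ball i j : (2 <= i + j)%N -> Tball vd (eta i j).
  by move=> ij; split; [case: (Hnov i j ij) | apply/nval_geP; rewrite -Ed; apply: Heta].
have bC1 : Tball (va + eps) C1 by split; last by apply/nval_geP; rewrite EFinD -Ea ltW.
have bC2 : Tball (vd + eps) C2 by split; last by apply/nval_geP; rewrite EFinD -Ed ltW.
have [[z1 z2] [[[n1 /nval_geP h1] [n2 /nval_geP h2]] Ez z_uniq]] :=
  Fsolve_unique_solution e0 na nb nc nd ha hb hc hd a_lead d_lead vab vdc vadbc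
    lam_ball eta_ball bC1 bC2.
exists z1, z2; split => //; split => // w1 w2 nw1 nw2 /nval_geP hw1 /nval_geP hw2 E1 E2.
by case: (z_uniq (w1, w2) (conj (conj nw1 hw1) (conj nw2 hw2)) E1 E2).
Qed.
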